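(* Fix $r\ge1$ and define $R_1=\{\tilde\mu:|\tilde\mu|\le r/\sin(\pi/10)\}$ and $R_2=\{\tilde\mu:\mathrm{Re}(\tilde\mu)\in[r/\tan(\pi/10),\epsilon^{-1/2}],\ \mathrm{Im}(\tilde\mu)\in[-2,2]\}$. Then $R_1$ is compact and $R_1\cup R_2$ contains $\tilde{\mathcal C}_\epsilon$. Moreover $g_\epsilon(\tilde\mu)\to e^{-\tilde\mu/2}$ as $\epsilon\to0$, uniformly in $\tilde\mu\in R_1$; and there exist $\epsilon_0>0$ and a constant $c>0$ such that for all $\epsilon<\epsilon_0$ and all $\tilde\mu\in R_2$, $$|g_\epsilon(\tilde\mu)|\le|e^{-\tilde\mu/2}|\,|e^{-c\epsilon^{1/2}\tilde\mu^2}|.$$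
   Context: $\tau=\frac{1-\epsilon^{1/2}}{1+\epsilon^{1/2}}$ and $g_\epsilon(\tilde\mu)=\prod_{k=0}^\infty(1-\epsilon^{1/2}\tilde\mu\tau^k)$. $\tilde{\mathcal C}_\epsilon=\{e^{i\theta}:\pi/2\le\theta\le3\pi/2\}\cup\{x\pm i:0<x\le\epsilon^{-1/2}-1\}\cup\{\epsilon^{-1/2}-1+iy:-1<y<1\}$. *)

From Stdlib Require Import Reals List.
From Coquelicot Require Import Coquelicot.
Open Scope R_scope.

Definition cexp (z : C) : C :=
  (exp (Re z) * cos (Im z), exp (Re z) * sin (Im z)).

Definition tau (eps : R) : R := (1 - sqrt eps) / (1 + sqrt eps).

Fixpoint gpart (eps : R) (mu : C) (n : nat) : C :=
  match n with
  | O => 1%C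
  | S m => (gpart eps mu m * (1 - RtoC (sqrt eps) * mu * RtoC (tau eps ^ m)))%C
  end.

Definition g (eps : R) (mu : C) : C :=
  (real (Lim_seq (fun n => Re (gpart eps mu n))),
   real (Lim_seq (fun n => Im (gpart eps mu n)))).

Definition compactC (P : C -> Prop) : Prop :=
  forall (I : Type) (U : I -> C -> Prop),
    (forall i, open (U i)) ->
    (forall z, P z -> exists i, U i z) ->
    exists l : list I, forall z, P z -> exists i, In i l /\ U i z.

Definition Rreg1 (r : R) (mu : C) : Prop := Cmod mu <= r / sin (PI / 10).

Definition Rreg2 (r eps : R) (mu : C) : Prop :=
  r / tan (PI / 10) <= Re mu <= / sqrt eps /\ -2 <= Im mu <= 2.

Definition Ceps (eps : R) (mu : C) : Prop :=
  (exists theta, PI / 2 <= theta <= 3 * PI / 2 /\ mu = (cos theta, sin theta))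
  \/ (exists x, 0 < x <= / sqrt eps - 1 /\ (mu = (x, 1) \/ mu = (x, -1)))
  \/ (exists y, -1 < y < 1 /\ mu = (/ sqrt eps - 1, y)).

From Stdlib Require Import Reals Lra List Classical ClassicalEpsilon.
From Coquelicot Require Import Coquelicot.
Open Scope R_scope.

(* Write [s = eps^{1/2}], [t = tau eps] and [w_k = s mu t^k], so that [g eps mu] is the product
   of the [1 - w_k], and [s * sum_k t^k = (1 + s) / 2].
   On a disc, [1 - w_k = exp (- w_k) + O(|w_k|^2)]; telescoping the two products gives
   [g eps mu = exp (- sum_k w_k) + O(s) = exp (- mu / 2) + O(s)] uniformly.
   On [R_2] one has [0 <= Re w_k <= 1] and [|Im mu| <= 2]; summing the bound
   [log |1 - x - i y|^2 <= - 2 x - x^2 + y^2 (1 + K x)] over [k] yields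
   [log |g eps mu|^2 <= - Re mu - s Re (mu^2) / 4], the Gaussian factor with [c = 1/8].
   [R_1] is a closed disc, hence compact; the contour only leaves it to the right of the corner
   [r / tan (PI/10) + i r] of [R_2], which lies on the boundary circle of [R_1]. *)

Lemma exp_le_mono (x y : R) : x <= y -> exp x <= exp y.
Proof.
  intros [hlt | ->]; [now apply Rlt_le, exp_increasing | apply Rle_refl].
Qed.

Lemma continuity_pt_of_ex_derive (f : R -> R) (x : R) : ex_derive f x -> continuity_pt f x.
Proof. intros H. apply continuity_pt_filterlim. now apply (ex_derive_continuous f). Qed.

Lemma one_sub_mul_exp_le (x : R) : 0 <= x -> (1 - x) * exp (x + x ^ 2 / 2) <= 1.
Proof.
  intros hx.
  set (f := fun y => (1 - y) * exp (y + y ^ 2 / 2)).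
  assert (Hd : forall y, is_derive f y (- y ^ 2 * exp (y + y ^ 2 / 2))).
  { intros y; unfold f; auto_derive; [easy |].
    replace (y * (y * 1) * / 2) with (y ^ 2 / 2) by (unfold Rdiv; ring). field. }
  destruct (MVT_gen f 0 x _ (fun y _ => Hd y)
              (fun y _ => continuity_pt_of_ex_derive _ _ (ex_intro _ _ (Hd y))))
    as [c [_ Hc]].
  change ((1 - x) * exp (x + x ^ 2 / 2)) with (f x).
  assert (f 0 = 1) by (unfold f; replace (0 + 0 ^ 2 / 2) with 0 by field; rewrite exp_0; ring).
  assert (0 <= c ^ 2 * exp (c + c ^ 2 / 2) * x)
    by (apply Rmult_le_pos; [apply Rmult_le_pos; [apply pow2_ge_0 | apply Rlt_le, exp_pos] | easy]).
  lra.
Qed.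

Definition Kc : R := 3 * exp 3.

Lemma Kc_pos : 0 < Kc.
Proof. unfold Kc. generalize (exp_pos 3). lra. Qed.

(* Keeping the [- x^2] term, not only [- 2 x], is what produces the Gaussian factor. *)
Lemma sq_one_sub_add_sq_le (x y : R) : 0 <= x <= 1 ->
  (1 - x) ^ 2 + y ^ 2 <= exp (- (2 * x + x ^ 2) + y ^ 2 * (1 + Kc * x)).
Proof.
  intros hx. set (u := 2 * x + x ^ 2).
  assert (hu : 0 <= u <= 3 * x) by (unfold u; nra).
  assert (Eu : exp (x + x ^ 2 / 2) * exp (x + x ^ 2 / 2) = exp u)
    by (rewrite <- exp_plus; unfold u; f_equal; field).
  assert (Hinv : exp u * exp (- u) = 1)
    by (rewrite <- exp_plus, Rplus_opp_r; apply exp_0).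
  assert (H1 : (1 - x) ^ 2 <= exp (- u)).
  { assert (h := one_sub_mul_exp_le x (proj1 hx)).
    assert (0 <= (1 - x) * exp (x + x ^ 2 / 2)) by (generalize (exp_pos (x + x ^ 2 / 2)); nra).
    assert ((1 - x) ^ 2 * exp u <= 1) by (rewrite <- Eu; nra).
    generalize (exp_pos (- u)) (exp_pos u); nra. }
  assert (H2 : exp u <= 1 + Kc * x).
  { assert (exp u - u * exp u <= 1) by (generalize (exp_ineq1_le (- u)) (exp_pos u); nra).
    assert (exp u <= exp 3) by (apply exp_le_mono; lra).
    unfold Kc. generalize (exp_pos u); nra. }
  assert (H3 : 1 + y ^ 2 * exp u <= exp (y ^ 2 * (1 + Kc * x))).
  { eapply Rle_trans; [apply exp_ineq1_le | apply exp_le_mono].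
    generalize (pow2_ge_0 y); nra. }
  rewrite exp_plus. fold u.
  assert ((1 - x) ^ 2 + y ^ 2 <= exp (- u) * (1 + y ^ 2 * exp u)).
  { rewrite Rmult_plus_distr_l, Rmult_1_r,
      (Rmult_comm (y ^ 2)), <- Rmult_assoc, (Rmult_comm (exp (- u))), Hinv. lra. }
  generalize (exp_pos (- u)); nra.
Qed.

Lemma sqrt_lt_1_of_lt_1 (eps : R) : 0 < eps < 1 -> 0 < sqrt eps < 1.
Proof.
  intros he. split; [now apply sqrt_lt_R0 |].
  rewrite <- sqrt_1. apply sqrt_lt_1_alt. lra.
Qed.

Lemma sqrt_lt_of_lt_sqr (eps d : R) : 0 <= eps < d ^ 2 -> 0 <= d -> sqrt eps < d.
Proof. intros he hd. rewrite <- (sqrt_pow2 d hd). apply sqrt_lt_1_alt. lra. Qed.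

Lemma ex_finite_lim_seq_of_geom_increments (u : nat -> R) (K q : R) : 0 <= q < 1 ->
  (forall n, Rabs (u (S n) - u n) <= K * q ^ n) -> ex_finite_lim_seq u.
Proof.
  intros hq Hu.
  assert (Hs : ex_series (fun n => u (S n) - u n)).
  { apply (ex_series_le (V := R_CompleteNormedModule) _ (fun n => K * q ^ n)); [exact Hu |].
    apply (ex_series_scal_l K (fun n => q ^ n)), ex_series_geom. rewrite Rabs_pos_eq; lra. }
  destruct Hs as [l Hl]. exists (u O + l).
  apply is_lim_seq_incr_1.
  apply is_lim_seq_ext with (fun n => u O + sum_n (fun k => u (S k) - u k) n).
  - intros n. induction n as [| n IH]; [rewrite sum_O | rewrite sum_Sn, <- IH];
      unfold plus; simpl; ring.
  - apply is_lim_seq_plus'; [apply is_lim_seq_const | exact Hl].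
Qed.

Lemma Cmod_le_abs_add (z : C) : Cmod z <= Rabs (fst z) + Rabs (snd z).
Proof.
  unfold Cmod. rewrite <- (sqrt_pow2 (Rabs (fst z) + Rabs (snd z)))
    by (generalize (Rabs_pos (fst z)) (Rabs_pos (snd z)); lra).
  apply sqrt_le_1_alt. rewrite <- (pow2_abs (fst z)), <- (pow2_abs (snd z)).
  generalize (Rabs_pos (fst z)) (Rabs_pos (snd z)); nra.
Qed.

Lemma Cmod_RtoC_mul (k : R) (z : C) : 0 <= k -> Cmod (RtoC k * z)%C = k * Cmod z.
Proof. intros hk. now rewrite Cmod_mult, Cmod_R, Rabs_pos_eq. Qed.

Lemma Cmod_one_sub_le_exp (w : C) : Cmod (1 - w)%C <= exp (Cmod w).
Proof.
  eapply Rle_trans; [apply Cmod_triangle |].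
  rewrite Cmod_1, Cmod_opp. generalize (exp_ineq1_le (Cmod w)). lra.
Qed.

Lemma Cmod_cexp (z : C) : Cmod (cexp z) = exp (fst z).
Proof.
  unfold cexp, Cmod, Re, Im; cbn [fst snd].
  assert (h := sin2_cos2 (snd z)). unfold Rsqr in h.
  replace ((exp (fst z) * cos (snd z)) ^ 2 + (exp (fst z) * sin (snd z)) ^ 2)
    with (exp (fst z) ^ 2 * (sin (snd z) * sin (snd z) + cos (snd z) * cos (snd z))) by ring.
  rewrite h, Rmult_1_r. apply sqrt_pow2, Rlt_le, exp_pos.
Qed.

Lemma Cmod_cexp_le (z : C) : Cmod (cexp z) <= exp (Cmod z).
Proof.
  rewrite Cmod_cexp. apply exp_le_mono.
  apply (Rle_trans _ (Rabs (Re z))); [apply Rle_abs | apply re_le_Cmod].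
Qed.

Lemma cexp_add (z1 z2 : C) : cexp (z1 + z2) = (cexp z1 * cexp z2)%C.
Proof.
  destruct z1 as [a1 b1], z2 as [a2 b2]. unfold cexp, Cmult, Cplus, Re, Im. simpl.
  rewrite exp_plus, cos_plus, sin_plus. f_equal; ring.
Qed.

Lemma cexp_0 : cexp 0 = 1%C.
Proof.
  unfold cexp, Re, Im. simpl. rewrite exp_0, cos_0, sin_0.
  apply injective_projections; simpl; ring.
Qed.

(* Mean value theorem in each coordinate, hence the factor [2]. *)
Lemma Cmod_sub_le_of_derive (F D : R -> C) (M : R) :
  (forall t, is_derive (fun u => fst (F u)) t (fst (D t))) ->
  (forall t, is_derive (fun u => snd (F u)) t (snd (D t))) ->
  (forall t, 0 <= t <= 1 -> Cmod (D t) <= M) ->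
  Cmod (F 1 - F 0)%C <= 2 * M.
Proof.
  intros H1 H2 HM.
  assert (Hc : forall (f df : R -> R), (forall t, is_derive f t (df t)) ->
            (forall t, 0 <= t <= 1 -> Rabs (df t) <= M) -> Rabs (f 1 - f 0) <= M).
  { clear. intros f df Hd Hb.
    destruct (MVT_gen f 0 1 df (fun y _ => Hd y)
                (fun y _ => continuity_pt_of_ex_derive _ _ (ex_intro _ _ (Hd y))))
      as [c [hc ->]].
    rewrite Rmin_left, Rmax_right in hc by lra.
    rewrite Rminus_0_r, Rmult_1_r. now apply Hb. }
  eapply Rle_trans; [apply Cmod_le_abs_add |].
  destruct (F 1) as [a1 b1] eqn:E1, (F 0) as [a0 b0] eqn:E0; simpl.
  assert (Hfst := Hc _ _ H1 (fun t ht => Rle_trans _ _ _ (re_le_Cmod (D t)) (HM t ht))).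
  assert (Hsnd := Hc _ _ H2 (fun t ht => Rle_trans _ _ _ (Rmax_r _ _)
                               (Rle_trans _ _ _ (Rmax_Cmod (D t)) (HM t ht)))).
  cbv beta in Hfst, Hsnd. rewrite E1, E0 in Hfst, Hsnd. simpl in Hfst, Hsnd.
  unfold Rminus in Hfst, Hsnd. lra.
Qed.

Definition Cq : R := 2 * exp 1 * exp 1.

Lemma Cq_pos : 0 < Cq.
Proof. unfold Cq. generalize (exp_pos 1). intros; nra. Qed.

(* [t |-> e^{tw} (1 - tw)] has derivative [- t w^2 e^{tw}], of size at most [e |w|^2]. *)
Lemma Cmod_one_sub_sub_cexp_le (w : C) :
  Cmod w <= 1 -> Cmod (1 - w - cexp (- w))%C <= Cq * Cmod w ^ 2.
Proof.
  intros hw.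
  set (F := fun t : R => (cexp (RtoC t * w) * (1 - RtoC t * w))%C).
  set (D := fun t : R => (- (RtoC t * (w * w)) * cexp (RtoC t * w))%C).
  assert (HD : Cmod (F 1 - F 0)%C <= 2 * (exp 1 * Cmod w ^ 2)).
  { apply Cmod_sub_le_of_derive with D;
      [intros t; destruct w as [a b]; unfold F, D, cexp, Re, Im, Cmult, Cminus, Cplus, Copp, RtoC;
       simpl; auto_derive; auto;
       rewrite ?Rmult_0_l, ?Ropp_0, ?Rplus_0_r, ?Rminus_0_r; ring .. |].
    intros t ht. unfold D. rewrite Cmod_mult, Cmod_opp, Cmod_RtoC_mul, Cmod_mult by lra.
    assert (Cmod (cexp (RtoC t * w)%C) <= exp 1).
    { eapply Rle_trans; [apply Cmod_cexp_le | apply exp_le_mono].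
      rewrite Cmod_RtoC_mul by lra. nra. }
    assert (0 <= t * (Cmod w * Cmod w) <= Cmod w * Cmod w) by (generalize (Cmod_ge_0 w); nra).
    generalize (Cmod_ge_0 (cexp (RtoC t * w)%C)). simpl. nra. }
  assert (E : (1 - w - cexp (- w) = cexp (- w) * (F 1 - F 0))%C).
  { unfold F. replace (RtoC 0 * w)%C with (RtoC 0) by ring.
    replace (RtoC 1 * w)%C with w by ring.
    rewrite cexp_0.
    transitivity (cexp (- w) * cexp w * (1 - w) - cexp (- w))%C; [| ring].
    rewrite <- cexp_add. replace (- w + w)%C with (RtoC 0) by ring. rewrite cexp_0. ring. }
  rewrite E, Cmod_mult. unfold Cq.
  assert (Cmod (cexp (- w)%C) <= exp 1)
    by (eapply Rle_trans; [apply Cmod_cexp_le | apply exp_le_mono; now rewrite Cmod_opp]).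
  generalize (Cmod_ge_0 (F 1 - F 0)%C) (exp_pos 1). nra.
Qed.

Lemma Cmod_le_of_sqr (z : C) (M : R) : 0 <= M -> fst z ^ 2 + snd z ^ 2 <= M ^ 2 -> Cmod z <= M.
Proof.
  intros hM h. unfold Cmod. rewrite <- (sqrt_pow2 M hM). now apply sqrt_le_1_alt.
Qed.

Definition Cseq_lim (P : nat -> C) (z : C) : Prop :=
  is_lim_seq (fun n => fst (P n)) (fst z) /\ is_lim_seq (fun n => snd (P n)) (snd z).

Lemma Cmod_sub_le_of_Cseq_lim (P Q : nat -> C) (p q : C) (v : nat -> R) (l : R) :
  Cseq_lim P p -> Cseq_lim Q q -> (forall n, Cmod (P n - Q n)%C <= v n) ->
  is_lim_seq v l -> Cmod (p - q)%C <= l.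
Proof.
  intros [P1 P2] [Q1 Q2] Hv Hl.
  assert (Hsq : forall (x y : nat -> R) (a b : R), is_lim_seq x a -> is_lim_seq y b ->
            is_lim_seq (fun n => x n ^ 2 + y n ^ 2) (a ^ 2 + b ^ 2)).
  { intros x y a b Hx Hy. replace (a ^ 2 + b ^ 2) with (a * a + b * b) by ring.
    apply is_lim_seq_ext with (fun n => x n * x n + y n * y n); [intros; ring |].
    apply is_lim_seq_plus'; apply is_lim_seq_mult'; easy. }
  assert (HC : is_lim_seq (fun n => Cmod (P n - Q n)%C) (Cmod (p - q)%C)).
  { apply (is_lim_seq_continuous sqrt (fun n => _ ^ 2 + _ ^ 2)).
    - apply continuity_pt_sqrt.
      generalize (pow2_ge_0 (fst (p - q)%C)) (pow2_ge_0 (snd (p - q)%C)); lra.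
    - apply Hsq; simpl; apply is_lim_seq_minus'; easy. }
  now apply (is_lim_seq_le _ _ _ _ Hv HC Hl).
Qed.

(** * The regions *)

Lemma closed_Cmod_le (M : R) : closed (fun z : C => Cmod z <= M).
Proof.
  apply (closed_comp (T := C_UniformSpace) Cmod (fun x => x <= M)); [| apply closed_le].
  intros z. apply (filterlim_norm (V := C_NormedModule)).
Qed.

(* Heine-Borel in the plane, from the gauge compactness of a square: each point
   gets a radius on which it is either inside one of the [U i] or outside [P]. *)
Lemma compactC_of_closed_bounded (P : C -> Prop) (M : R) :
  closed P -> (forall z, P z -> Cmod z <= M) -> compactC P.
Proof.
  intros HP HM I U HU Hcov.
  destruct (classic (exists z, P z)) as [[z0 Pz0] | Hempty];
    [| exists nil; intros z Pz; exfalso; eauto].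
  destruct (Hcov z0 Pz0) as [i0 _].
  assert (Hgauge : forall z : C, exists p : posreal * I,
             (P z -> forall y, ball z (fst p) y -> U (snd p) y) /\
             (~ P z -> forall y, ball z (fst p) y -> ~ P y)).
  { intros z. destruct (classic (P z)) as [Pz | nPz].
    - destruct (Hcov z Pz) as [i Hi]. destruct (HU i z Hi) as [e He].
      exists (e, i). simpl. split; [easy | tauto].
    - destruct (open_not P HP z nPz) as [e He].
      exists (e, i0). simpl. split; [tauto | easy]. }
  set (gauge := fun t : Compactness.Tn 2 R =>
                  proj1_sig (constructive_indefinite_description _ (Hgauge (fst t, fst (snd t))))).
  destruct (NNPP _ (compactness_list 2 (- M, (- M, tt)) (M, (M, tt)) (fun t => fst (gauge t))))
    as [l Hl].
  exists (map (fun t => snd (gauge t)) l). intros z Pz.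
  destruct (Hl (fst z, (snd z, tt))) as [[t1 [t2 []]] [Hin [_ [c1 [c2 _]]]]].
  { simpl. assert (h1 := re_le_Cmod z).
    assert (h2 := Rle_trans _ _ _ (Rmax_r _ _) (Rmax_Cmod z)).
    specialize (HM z Pz). unfold Re in h1. apply Rabs_le_between in h1, h2. lra. }
  exists (snd (gauge (t1, (t2, tt)))).
  split; [exact (in_map (fun t => snd (gauge t)) l _ Hin) |].
  unfold gauge in *. destruct (constructive_indefinite_description _ _) as [[e i] [Hin_P Hout_P]].
  simpl in *.
  assert (Hball : ball (t1, t2) e z) by (split; [exact c1 | exact c2]).
  destruct (classic (P (t1, t2))) as [Pt | nPt];
    [now apply Hin_P | now exfalso; apply (Hout_P nPt z)].
Qed.

Lemma sin_cos_tan_PI10 : 0 < sin (PI / 10) /\ 0 < cos (PI / 10) /\ 0 < tan (PI / 10) < 1.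
Proof.
  assert (HP := PI_RGT_0).
  assert (hs : 0 < sin (PI / 10)) by (apply sin_gt_0; lra).
  assert (hc : 0 < cos (PI / 10)) by (apply cos_gt_0; lra).
  repeat split; [easy | easy | now apply Rdiv_lt_0_compat |].
  rewrite <- tan_PI4. apply tan_increasing; lra.
Qed.

Lemma le_div_tan_PI10 (r : R) : 0 <= r -> r <= r / tan (PI / 10).
Proof.
  destruct sin_cos_tan_PI10 as [_ [_ [ht0 ht1]]]. intros hr. unfold Rdiv.
  assert (1 < / tan (PI / 10)) by (rewrite <- Rinv_1; apply Rinv_lt_contravar; lra).
  nra.
Qed.

(* The corner [r / tan (PI/10) + i r] of [R_2]'s left edge lies on the circle bounding [R_1]. *)
Lemma sqr_div_sin_PI10 (r : R) : (r / sin (PI / 10)) ^ 2 = (r / tan (PI / 10)) ^ 2 + r ^ 2.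
Proof.
  destruct sin_cos_tan_PI10 as [hs [hc _]].
  assert (h := sin2_cos2 (PI / 10)). unfold Rsqr in h.
  transitivity (r ^ 2 * (sin (PI / 10) * sin (PI / 10) + cos (PI / 10) * cos (PI / 10))
                / sin (PI / 10) ^ 2).
  - rewrite h. field. lra.
  - unfold tan. field. lra.
Qed.

Lemma Ceps_sub_Rreg (r : R) (hr : 1 <= r) :
  forall eps, 0 < eps -> forall mu, Ceps eps mu -> Rreg1 r mu \/ Rreg2 r eps mu.
Proof.
  destruct sin_cos_tan_PI10 as [hs _].
  set (a := r / tan (PI / 10)).
  assert (ha : r <= a) by (apply le_div_tan_PI10; lra).
  assert (hM : 0 <= r / sin (PI / 10)) by (apply Rlt_le, Rdiv_lt_0_compat; lra).
  assert (hdisc : forall z : C, fst z ^ 2 + snd z ^ 2 <= a ^ 2 + r ^ 2 -> Rreg1 r z)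
    by (intros; apply Cmod_le_of_sqr; [easy | now rewrite sqr_div_sin_PI10]).
  intros eps heps mu H. unfold Rreg2, Re, Im. fold a.
  assert (0 < / sqrt eps) by now apply Rinv_0_lt_compat, sqrt_lt_R0.
  destruct H as [[th [_ ->]] | [[x [hx [-> | ->]]] | [y [hy ->]]]]; simpl.
  - left. apply hdisc. simpl. generalize (sin2_cos2 th). unfold Rsqr. nra.
  - destruct (Rle_lt_dec x a); [left; apply hdisc; simpl; nra | right; lra].
  - destruct (Rle_lt_dec x a); [left; apply hdisc; simpl; nra | right; lra].
  - destruct (Rle_lt_dec a (/ sqrt eps - 1)); [right; lra |].
    left. apply hdisc. simpl. destruct (Rle_lt_dec 0 (/ sqrt eps - 1)); nra.
Qed.

(** * The partial products *)

Lemma tau_bounds (eps : R) : 0 < eps < 1 -> 0 < tau eps < 1.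
Proof.
  intros he. destruct (sqrt_lt_1_of_lt_1 eps he). unfold tau. split.
  - apply Rdiv_lt_0_compat; lra.
  - apply Rlt_div_l; lra.
Qed.

Lemma pow_tau_bounds (eps : R) (n : nat) : 0 < eps < 1 -> 0 <= tau eps ^ n <= 1.
Proof.
  intros he. assert (ht := tau_bounds eps he).
  split; [apply pow_le | rewrite <- (pow1 n); apply pow_incr]; lra.
Qed.

(* [geom_sum t (t ^ n)] is [sum_(k < n) t ^ k]. *)
Definition geom_sum (t T : R) : R := (1 - T) / (1 - t).

Lemma geom_sum_mul (t T : R) : t <> 1 -> geom_sum t (t * T) = geom_sum t T + T.
Proof. intros ht. unfold geom_sum. field. lra. Qed.

Lemma geom_sum_1 (t : R) : geom_sum t 1 = 0.
Proof. unfold geom_sum. unfold Rdiv. rewrite Rminus_diag. ring. Qed.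

Lemma geom_sum_ge0 (t T : R) : t < 1 -> T <= 1 -> 0 <= geom_sum t T.
Proof. intros. apply Rdiv_le_0_compat; lra. Qed.

Lemma geom_sum_tau (eps T : R) : 0 < eps < 1 ->
  sqrt eps * geom_sum (tau eps) T = (1 - T) * (1 + sqrt eps) / 2.
Proof.
  intros he. destruct (sqrt_lt_1_of_lt_1 eps he). unfold geom_sum, tau. field. lra.
Qed.

Lemma geom_sum_tau_sq (eps T : R) : 0 < eps < 1 ->
  sqrt eps ^ 2 * geom_sum (tau eps ^ 2) T = sqrt eps * (1 - T) * (1 + sqrt eps) ^ 2 / 4.
Proof.
  intros he. destruct (sqrt_lt_1_of_lt_1 eps he). unfold geom_sum, tau. field. lra.
Qed.

Lemma gpart_S (eps : R) (mu : C) (n : nat) :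
  gpart eps mu (S n) = (gpart eps mu n * (1 - RtoC (sqrt eps) * mu * RtoC (tau eps ^ n)))%C.
Proof. reflexivity. Qed.

Lemma Cmod_gpart_factor (eps : R) (mu : C) (T : R) : 0 < eps -> 0 <= T ->
  Cmod (RtoC (sqrt eps) * mu * RtoC T)%C = sqrt eps * Cmod mu * T.
Proof.
  intros. rewrite Cmod_mult, Cmod_RtoC_mul, Cmod_R, Rabs_pos_eq by (apply sqrt_pos || easy).
  ring.
Qed.

Lemma Cmod_gpart_le (eps : R) (mu : C) (n : nat) : 0 < eps < 1 ->
  Cmod (gpart eps mu n) <= exp (Cmod mu * sqrt eps * geom_sum (tau eps) (tau eps ^ n)).
Proof.
  intros he. assert (ht := tau_bounds eps he).
  induction n as [| n IH].
  - simpl. rewrite Cmod_1, geom_sum_1, Rmult_0_r, exp_0. lra.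
  - rewrite gpart_S, Cmod_mult, <- (tech_pow_Rmult (tau eps) n), geom_sum_mul,
      Rmult_plus_distr_l, exp_plus by lra.
    apply Rmult_le_compat; try apply Cmod_ge_0; [easy |].
    eapply Rle_trans; [apply Cmod_one_sub_le_exp |].
    rewrite Cmod_gpart_factor by (lra || now apply pow_le; lra). right. f_equal. ring.
Qed.

Lemma Cseq_lim_gpart (eps : R) (mu : C) : 0 < eps < 1 -> Cseq_lim (gpart eps mu) (g eps mu).
Proof.
  intros he. assert (ht := tau_bounds eps he). assert (hs := sqrt_lt_1_of_lt_1 eps he).
  set (B := exp (Cmod mu * sqrt eps * geom_sum (tau eps) 0)).
  assert (Hd : forall n, Cmod (gpart eps mu (S n) - gpart eps mu n)%C
                         <= B * Cmod mu * sqrt eps * tau eps ^ n).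
  { intros n. rewrite gpart_S.
    replace (gpart eps mu n * (1 - RtoC (sqrt eps) * mu * RtoC (tau eps ^ n)) - gpart eps mu n)%C
      with (- (gpart eps mu n * (RtoC (sqrt eps) * mu * RtoC (tau eps ^ n))))%C by ring.
    assert (0 <= tau eps ^ n) by (apply pow_le; lra).
    rewrite Cmod_opp, Cmod_mult, Cmod_gpart_factor by lra.
    assert (Cmod (gpart eps mu n) <= B).
    { eapply Rle_trans; [apply Cmod_gpart_le, he | apply exp_le_mono].
      apply Rmult_le_compat_l; [generalize (Cmod_ge_0 mu); nra |].
      unfold geom_sum. apply Rmult_le_compat_r; [apply Rlt_le, Rinv_0_lt_compat |]; lra. }
    replace (B * Cmod mu * sqrt eps * tau eps ^ n)
      with (B * (sqrt eps * Cmod mu * tau eps ^ n)) by ring.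
    apply Rmult_le_compat_r; [| easy].
    apply Rmult_le_pos; [apply Rmult_le_pos; [lra | apply Cmod_ge_0] | easy]. }
  assert (Hcoord : forall f : C -> R, (forall z, Rabs (f z) <= Cmod z) ->
            (forall z w, f (z - w)%C = f z - f w) ->
            is_lim_seq (fun n => f (gpart eps mu n))
                       (real (Lim_seq (fun n => f (gpart eps mu n))))).
  { intros f Hf Hsub.
    destruct (ex_finite_lim_seq_of_geom_increments (fun n => f (gpart eps mu n))
                (B * Cmod mu * sqrt eps) (tau eps)) as [l Hl]; [lra | |].
    - intros n. rewrite <- Hsub. eapply Rle_trans; [apply Hf | apply Hd].
    - now rewrite (is_lim_seq_unique _ _ Hl). }
  unfold g, Re, Im. split; simpl.
  - apply (Hcoord fst); [apply re_le_Cmod | now intros [] []].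
  - apply (Hcoord snd); [| now intros [] []].
    intros; eapply Rle_trans; [apply Rmax_r | apply Rmax_Cmod].
Qed.

(** * Uniform convergence on discs *)

(* [epart eps mu (tau eps ^ n)] is [prod_(k < n) exp (- eps^{1/2} mu tau^k)]. *)
Definition epart (eps : R) (mu : C) (T : R) : C :=
  cexp (- RtoC (sqrt eps * geom_sum (tau eps) T) * mu).

Lemma epart_1 (eps : R) (mu : C) : epart eps mu 1 = 1%C.
Proof.
  unfold epart. rewrite geom_sum_1, Rmult_0_r, <- cexp_0. f_equal. ring.
Qed.

Lemma epart_mul (eps : R) (mu : C) (T : R) : 0 < eps < 1 ->
  epart eps mu (tau eps * T) = (epart eps mu T * cexp (- (RtoC (sqrt eps) * mu * RtoC T)))%C.
Proof.
  intros he. assert (ht := tau_bounds eps he).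
  unfold epart. rewrite <- cexp_add, geom_sum_mul by lra. f_equal.
  rewrite Rmult_plus_distr_l, RtoC_plus, !RtoC_mult. ring.
Qed.

Lemma Cmod_epart_le (eps : R) (mu : C) (T : R) : 0 < eps < 1 -> T <= 1 ->
  Cmod (epart eps mu T) <= exp (Cmod mu * sqrt eps * geom_sum (tau eps) T).
Proof.
  intros he hT. assert (ht := tau_bounds eps he).
  eapply Rle_trans; [apply Cmod_cexp_le | apply exp_le_mono].
  assert (0 <= geom_sum (tau eps) T) by (apply geom_sum_ge0; lra).
  rewrite Cmod_mult, Cmod_opp, Cmod_R, Rabs_pos_eq
    by (apply Rmult_le_pos; [apply sqrt_pos | easy]).
  right. ring.
Qed.

(* Telescoping [prod (1 - w_k) - prod exp (- w_k)], with [|1 - w - e^{-w}| <= Cq |w|^2]. *)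
Lemma Cmod_gpart_sub_epart_le (eps : R) (mu : C) (n : nat) :
  0 < eps < 1 -> sqrt eps * Cmod mu <= 1 ->
  Cmod (gpart eps mu n - epart eps mu (tau eps ^ n))%C <=
    exp (Cmod mu * sqrt eps * geom_sum (tau eps) (tau eps ^ n))
    * (Cq * (Cmod mu ^ 2 * sqrt eps ^ 2 * geom_sum (tau eps ^ 2) ((tau eps ^ n) ^ 2))).
Proof.
  intros he hm. assert (ht := tau_bounds eps he). assert (hs := sqrt_lt_1_of_lt_1 eps he).
  assert (hC := Cq_pos). assert (hmu := Cmod_ge_0 mu).
  induction n as [| n IH].
  - rewrite pow_O, epart_1, pow1, !geom_sum_1. simpl gpart.
    replace (1 - 1)%C with (RtoC 0) by ring. rewrite Cmod_0, !Rmult_0_r. lra.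
  - set (T := tau eps ^ n) in *.
    assert (hT : 0 <= T <= 1) by now apply pow_tau_bounds.
    set (w := (RtoC (sqrt eps) * mu * RtoC T)%C).
    assert (hw : Cmod w = sqrt eps * Cmod mu * T) by (apply Cmod_gpart_factor; lra).
    assert (hw1 : Cmod w <= 1) by (rewrite hw; nra).
    rewrite gpart_S, <- (tech_pow_Rmult (tau eps) n), epart_mul by easy. fold T w.
    replace (gpart eps mu n * (1 - w) - epart eps mu T * cexp (- w))%C
      with ((gpart eps mu n - epart eps mu T) * (1 - w) + epart eps mu T * (1 - w - cexp (- w)))%C
      by ring.
    rewrite Rpow_mult_distr, !geom_sum_mul by (simpl; nra).
    set (A := Cmod mu * sqrt eps * geom_sum (tau eps) T) in *.
    set (B := Cmod mu ^ 2 * sqrt eps ^ 2 * geom_sum (tau eps ^ 2) (T ^ 2)) in *.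
    assert (hB : 0 <= B).
    { apply Rmult_le_pos; [apply Rmult_le_pos; apply pow2_ge_0 |].
      apply geom_sum_ge0; simpl; nra. }
    replace (Cmod mu * sqrt eps * (geom_sum (tau eps) T + T)) with (A + Cmod w)
      by (unfold A; rewrite hw; ring).
    replace (Cmod mu ^ 2 * sqrt eps ^ 2 * (geom_sum (tau eps ^ 2) (T ^ 2) + T ^ 2))
      with (B + Cmod w ^ 2) by (unfold B; rewrite hw; ring).
    eapply Rle_trans; [apply Cmod_triangle |]. rewrite !Cmod_mult, exp_plus.
    assert (h1 := Rmult_le_compat _ _ _ _ (Cmod_ge_0 _) (Cmod_ge_0 _) IH (Cmod_one_sub_le_exp w)).
    assert (h2 := Rmult_le_compat _ _ _ _ (Cmod_ge_0 _) (Cmod_ge_0 _)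
                    (Cmod_epart_le eps mu T he (proj2 hT)) (Cmod_one_sub_sub_cexp_le w hw1)).
    fold A in h2.
    assert (1 <= exp (Cmod w)) by (rewrite <- exp_0; apply exp_le_mono, Cmod_ge_0).
    assert (0 <= exp A * (Cq * Cmod w ^ 2))
      by (apply Rmult_le_pos; [apply Rlt_le, exp_pos | generalize (pow2_ge_0 (Cmod w)); nra]).
    assert (exp A * (Cq * Cmod w ^ 2) <= exp A * exp (Cmod w) * (Cq * Cmod w ^ 2))
      by (rewrite (Rmult_comm (exp A)), Rmult_assoc; nra).
    lra.
Qed.

Lemma Cseq_lim_epart (eps : R) (mu : C) : 0 < eps < 1 ->
  Cseq_lim (fun n => epart eps mu (tau eps ^ n)) (epart eps mu 0).
Proof.
  intros he. assert (ht := tau_bounds eps he).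
  assert (Hc : forall f : R -> R, ex_derive f 0 -> is_lim_seq (fun n => f (tau eps ^ n)) (f 0)).
  { intros f Hf. apply is_lim_seq_continuous; [now apply continuity_pt_of_ex_derive |].
    apply is_lim_seq_geom. rewrite Rabs_pos_eq; lra. }
  destruct mu as [a b].
  split; apply (Hc (fun T => _ (epart eps (a, b) T)));
    unfold epart, cexp, geom_sum, Re, Im; simpl; auto_derive; lra.
Qed.

Lemma epart_0 (eps : R) (mu : C) : 0 < eps < 1 ->
  epart eps mu 0 = (cexp (- mu / 2) * cexp (- (RtoC (sqrt eps / 2) * mu)))%C.
Proof.
  intros he. unfold epart. rewrite <- cexp_add, geom_sum_tau by easy. f_equal.
  destruct mu as [a b]. unfold Cdiv, Cinv, Cmult, Copp, Cplus, RtoC. simpl.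
  f_equal; field.
Qed.

Lemma Cmod_g_sub_epart_0_le (eps : R) (mu : C) : 0 < eps < 1 -> sqrt eps * Cmod mu <= 1 ->
  Cmod (g eps mu - epart eps mu 0)%C <= exp (Cmod mu) * (Cq * Cmod mu ^ 2 * sqrt eps).
Proof.
  intros he hm. assert (hs := sqrt_lt_1_of_lt_1 eps he). assert (hmu := Cmod_ge_0 mu).
  apply (Cmod_sub_le_of_Cseq_lim (gpart eps mu) (fun n => epart eps mu (tau eps ^ n)) _ _
           (fun _ => exp (Cmod mu) * (Cq * Cmod mu ^ 2 * sqrt eps)));
    [now apply Cseq_lim_gpart | now apply Cseq_lim_epart | | apply is_lim_seq_const].
  intros n. eapply Rle_trans; [now apply Cmod_gpart_sub_epart_le |].
  assert (hT := pow_tau_bounds eps n he). set (T := tau eps ^ n) in *.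
  rewrite Rmult_assoc, geom_sum_tau, (Rmult_assoc (Cmod mu ^ 2)), geom_sum_tau_sq by easy.
  assert (hA : Cmod mu * ((1 - T) * (1 + sqrt eps) / 2) <= Cmod mu).
  { assert ((1 - T) * (1 + sqrt eps) / 2 <= 1) by nra. nra. }
  assert (hB : 0 <= Cmod mu ^ 2 * (sqrt eps * (1 - T ^ 2) * (1 + sqrt eps) ^ 2 / 4)
               <= Cmod mu ^ 2 * sqrt eps).
  { assert (0 <= T ^ 2 <= 1) by (simpl; nra).
    assert (0 <= (1 + sqrt eps) ^ 2 <= 4) by (simpl; nra).
    assert (0 <= Cmod mu ^ 2) by apply pow2_ge_0.
    assert (0 <= (1 - T ^ 2) * (1 + sqrt eps) ^ 2 / 4 <= 1) by (split; nra).
    replace (Cmod mu ^ 2 * (sqrt eps * (1 - T ^ 2) * (1 + sqrt eps) ^ 2 / 4))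
      with (Cmod mu ^ 2 * sqrt eps * ((1 - T ^ 2) * (1 + sqrt eps) ^ 2 / 4)) by field.
    split; [| rewrite <- (Rmult_1_r (Cmod mu ^ 2 * sqrt eps)) at 2]; nra. }
  assert (hC := Cq_pos).
  rewrite (Rmult_assoc Cq).
  apply Rmult_le_compat; [apply Rlt_le, exp_pos | nra | now apply exp_le_mono | nra].
Qed.

Lemma Cmod_g_sub_cexp_le (eps : R) (mu : C) : 0 < eps < 1 -> sqrt eps * Cmod mu <= 1 ->
  Cmod (g eps mu - cexp (- mu / 2))%C
    <= exp (Cmod mu) * (2 * Cq * Cmod mu ^ 2 + Cmod mu) * sqrt eps.
Proof.
  intros he hm. assert (hs := sqrt_lt_1_of_lt_1 eps he). assert (hmu := Cmod_ge_0 mu).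
  assert (hC := Cq_pos).
  set (w := (RtoC (sqrt eps / 2) * mu)%C).
  assert (hw : Cmod w = sqrt eps * Cmod mu / 2) by (unfold w; rewrite Cmod_RtoC_mul; lra).
  assert (Hw : Cmod (cexp (- w) - 1)%C <= (Cq * Cmod mu ^ 2 + Cmod mu) * sqrt eps).
  { replace (cexp (- w) - 1)%C with (- (1 - w - cexp (- w)) - w)%C by ring.
    eapply Rle_trans; [apply Cmod_triangle |]. rewrite !Cmod_opp.
    assert (h := Cmod_one_sub_sub_cexp_le w ltac:(lra)). rewrite hw in *.
    assert (Cq * (sqrt eps * Cmod mu / 2) ^ 2 <= Cq * Cmod mu ^ 2 * sqrt eps).
    { replace ((sqrt eps * Cmod mu / 2) ^ 2) with (Cmod mu ^ 2 * (sqrt eps * sqrt eps / 4))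
        by field.
      rewrite <- Rmult_assoc. apply Rmult_le_compat_l; [nra |].
      assert (0 <= Cmod mu ^ 2) by apply pow2_ge_0. nra. }
    nra. }
  assert (He : Cmod (cexp (- mu / 2)) <= exp (Cmod mu)).
  { eapply Rle_trans; [apply Cmod_cexp_le | apply exp_le_mono].
    rewrite Cmod_div, Cmod_opp, Cmod_R, Rabs_pos_eq; [lra | lra |].
    injection as h. lra. }
  replace (g eps mu - cexp (- mu / 2))%C with
    ((g eps mu - epart eps mu 0) + cexp (- mu / 2) * (cexp (- w) - 1))%C
    by (rewrite epart_0 by easy; fold w; ring).
  eapply Rle_trans; [apply Cmod_triangle |]. rewrite Cmod_mult.
  assert (H1 := Cmod_g_sub_epart_0_le eps mu he hm).
  assert (H2 := Rmult_le_compat _ _ _ _ (Cmod_ge_0 _) (Cmod_ge_0 _) He Hw).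
  assert (0 < exp (Cmod mu)) by apply exp_pos.
  nra.
Qed.

Lemma g_cvg_unif_disc (M : R) : 0 <= M ->
  forall eta, 0 < eta -> exists delta, 0 < delta /\
    forall eps, 0 < eps < delta -> forall mu, Cmod mu <= M ->
      Cmod (g eps mu - cexp (- mu / 2))%C < eta.
Proof.
  intros hM eta heta. assert (hC := Cq_pos).
  set (K := exp M * (2 * Cq * M ^ 2 + M)).
  assert (hK : 0 <= K)
    by (apply Rmult_le_pos; [apply Rlt_le, exp_pos | generalize (pow2_ge_0 M); nra]).
  set (d := Rmin (/ (M + 1)) (eta / (K + 1))).
  assert (hd : 0 < d)
    by (apply Rmin_glb_lt; [apply Rinv_0_lt_compat | apply Rdiv_lt_0_compat]; lra).
  assert (hdM : d * M + d <= 1).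
  { assert (h := Rmult_le_compat_r (M + 1) _ _ ltac:(lra) (Rmin_l (/ (M + 1)) (eta / (K + 1)))).
    rewrite Rinv_l, Rmult_plus_distr_l, Rmult_1_r in h by lra. exact h. }
  assert (hdK : K * d < eta).
  { apply (Rle_lt_trans _ (K * (eta / (K + 1)))); [apply Rmult_le_compat_l, Rmin_r; easy |].
    apply (Rmult_lt_reg_r (K + 1)); [lra |]. field_simplify; nra. }
  exists (d ^ 2). split; [now apply pow_lt |]. intros eps he mu hmu.
  assert (hs : sqrt eps < d) by (apply sqrt_lt_of_lt_sqr; lra).
  assert (hs0 := sqrt_pos eps). assert (hmu0 := Cmod_ge_0 mu).
  assert (he1 : 0 < eps < 1).
  { split; [lra |]. apply (Rlt_le_trans _ (d ^ 2)); [lra |].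
    assert (d <= 1) by (generalize (Rmult_le_pos d M); lra). simpl. nra. }
  assert (sqrt eps * Cmod mu <= d * M) by (apply Rmult_le_compat; lra).
  eapply Rle_lt_trans; [apply Cmod_g_sub_cexp_le; [easy | nra] |].
  assert (exp (Cmod mu) * (2 * Cq * Cmod mu ^ 2 + Cmod mu) <= K).
  { apply Rmult_le_compat; [apply Rlt_le, exp_pos | generalize (pow2_ge_0 (Cmod mu)); nra
                           | now apply exp_le_mono |].
    apply Rplus_le_compat; [apply Rmult_le_compat_l; [lra | now apply pow_incr] | easy]. }
  apply (Rle_lt_trans _ (K * sqrt eps)); [apply Rmult_le_compat_r; [easy | easy] |].
  apply (Rle_lt_trans _ (K * d)); [apply Rmult_le_compat_l; lra | easy].
Qed.

(** * The Gaussian bound on [R_2] *)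

(* The exponent of [sq_one_sub_add_sq_le] summed over [x = s a t^k], [y = s b t^k], [k < n],
   with [T = t ^ n]. *)
Definition gpart_exponent (s a b t T : R) : R :=
  - 2 * s * a * geom_sum t T - s ^ 2 * a ^ 2 * geom_sum (t ^ 2) (T ^ 2)
  + s ^ 2 * b ^ 2 * geom_sum (t ^ 2) (T ^ 2) + Kc * s ^ 3 * a * b ^ 2 * geom_sum (t ^ 3) (T ^ 3).

Lemma sqr_Cmod_gpart_le (eps : R) (mu : C) (n : nat) :
  0 < eps < 1 -> 0 <= sqrt eps * fst mu <= 1 ->
  Cmod (gpart eps mu n) ^ 2
    <= exp (gpart_exponent (sqrt eps) (fst mu) (snd mu) (tau eps) (tau eps ^ n)).
Proof.
  intros he ha. assert (ht := tau_bounds eps he).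
  induction n as [| n IH].
  - simpl gpart. unfold gpart_exponent. rewrite Cmod_1, pow_O, !pow1, !geom_sum_1.
    match goal with |- _ <= exp ?x => replace x with 0 by ring end. rewrite exp_0. lra.
  - assert (hT := pow_tau_bounds eps n he). set (T := tau eps ^ n) in *.
    rewrite gpart_S, Cmod_mult, Rpow_mult_distr, <- (tech_pow_Rmult (tau eps) n). fold T.
    replace (Cmod (1 - RtoC (sqrt eps) * mu * RtoC T)%C ^ 2)
      with ((1 - sqrt eps * fst mu * T) ^ 2 + (sqrt eps * snd mu * T) ^ 2)
      by (rewrite Cmod2_alt; destruct mu; unfold Re, Im; simpl; ring).
    eapply Rle_trans.
    { apply Rmult_le_compat; [apply pow2_ge_0 | | exact IH |].
      - generalize (pow2_ge_0 (1 - sqrt eps * fst mu * T)) (pow2_ge_0 (sqrt eps * snd mu * T)).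
        lra.
      - apply sq_one_sub_add_sq_le. split; nra. }
    rewrite <- exp_plus. apply exp_le_mono. right. unfold gpart_exponent.
    rewrite !Rpow_mult_distr, !geom_sum_mul by (simpl; nra). ring.
Qed.

Lemma Cmod_g_le_exponent (eps : R) (mu : C) : 0 < eps < 1 -> 0 <= sqrt eps * fst mu <= 1 ->
  Cmod (g eps mu) <= exp (gpart_exponent (sqrt eps) (fst mu) (snd mu) (tau eps) 0 / 2).
Proof.
  intros he ha. assert (ht := tau_bounds eps he).
  set (E := fun T => gpart_exponent (sqrt eps) (fst mu) (snd mu) (tau eps) T).
  replace (g eps mu) with (g eps mu - 0)%C by ring.
  apply (Cmod_sub_le_of_Cseq_lim (gpart eps mu) (fun _ => 0%C) _ _
           (fun n => exp (E (tau eps ^ n) / 2)));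
    [now apply Cseq_lim_gpart | split; apply is_lim_seq_const | |].
  - intros n. replace (gpart eps mu n - 0)%C with (gpart eps mu n) by ring.
    assert (H := sqr_Cmod_gpart_le eps mu n he ha). fold (E (tau eps ^ n)) in H.
    rewrite <- (Rmult_1_l (E _)), <- (Rplus_half_diag 1), Rmult_plus_distr_r, exp_plus in H.
    generalize (Cmod_ge_0 (gpart eps mu n)) (exp_pos (E (tau eps ^ n) / 2)).
    replace (1 / 2 * E (tau eps ^ n)) with (E (tau eps ^ n) / 2) in H by field.
    simpl in H. nra.
  - apply (is_lim_seq_continuous (fun T => exp (E T / 2))).
    + apply continuity_pt_of_ex_derive. unfold E, gpart_exponent, geom_sum.
      auto_derive. simpl. repeat split; nra.
    + apply is_lim_seq_geom. rewrite Rabs_pos_eq; lra.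
Qed.

Lemma gpart_exponent_le (s a b : R) :
  0 < s <= 1 / 4 -> Kc * s <= 1 / 8 -> 1 <= a -> b ^ 2 <= 4 ->
  gpart_exponent s a b ((1 - s) / (1 + s)) 0 <= - a - s * (a ^ 2 - b ^ 2) / 4.
Proof.
  intros hs hK ha hb. set (t := (1 - s) / (1 + s)).
  assert (ht : 0 < t < 1) by (unfold t; split; [apply Rdiv_lt_0_compat | apply Rlt_div_l]; lra).
  assert (G1 : 2 * s * geom_sum t 0 = 1 + s) by (unfold geom_sum, t; field; lra).
  assert (G2 : s ^ 2 * geom_sum (t ^ 2) (0 ^ 2) = s * (1 + s) ^ 2 / 4)
    by (unfold geom_sum, t; field; lra).
  assert (G3 : s ^ 2 * geom_sum (t ^ 3) (0 ^ 3) <= s * (1 + s) / 2).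
  { replace (s * (1 + s) / 2) with (s ^ 2 * geom_sum t 0) by (unfold geom_sum, t; field; lra).
    apply Rmult_le_compat_l; [apply pow2_ge_0 |]. unfold geom_sum.
    replace (0 ^ 3) with 0 by ring. apply Rmult_le_compat_l; [lra |].
    apply Rinv_le_contravar; [lra |]. simpl. nra. }
  set (g3 := s ^ 2 * geom_sum (t ^ 3) (0 ^ 3)) in G3.
  assert (Hg3 : 0 <= g3)
    by (apply Rmult_le_pos; [apply pow2_ge_0 | apply geom_sum_ge0; simpl; nra]).
  assert (HK : Kc * s * g3 * b ^ 2 <= 5 / 16 * s).
  { assert (Kc * s * g3 <= 1 / 8 * (s * (1 + s) / 2))
      by (apply Rmult_le_compat; [generalize Kc_pos; nra | easy | easy | easy]).
    generalize (pow2_ge_0 b). nra. }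
  replace (gpart_exponent s a b t 0)
    with (- a * (2 * s * geom_sum t 0) - (a ^ 2 - b ^ 2) * (s ^ 2 * geom_sum (t ^ 2) (0 ^ 2))
          + (Kc * s * g3 * b ^ 2) * a) by (unfold gpart_exponent, g3; ring).
  rewrite G1, G2.
  assert (0 <= b ^ 2) by apply pow2_ge_0.
  assert (2 * s + s ^ 2 <= 9 / 16) by (simpl; nra).
  assert (0 <= a ^ 2 * (2 * s + s ^ 2)) by (simpl; nra).
  assert (b ^ 2 * (2 * s + s ^ 2) <= 4 * (9 / 16)) by nra.
  nra.
Qed.

Lemma Cmod_g_le_gaussian (r : R) : 1 <= r -> exists eps0 c, 0 < eps0 /\ 0 < c /\
  forall eps, 0 < eps < eps0 -> forall mu, Rreg2 r eps mu ->
    Cmod (g eps mu)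
      <= Cmod (cexp (- mu / 2)%C) * Cmod (cexp (- (RtoC (c * sqrt eps)) * (mu * mu))%C).
Proof.
  intros hr. assert (hK := Kc_pos).
  assert (ha0 : r <= r / tan (PI / 10)) by (apply le_div_tan_PI10; lra).
  set (d := Rmin (1 / 4) (/ (8 * Kc))).
  assert (hd : 0 < d) by (apply Rmin_glb_lt; [lra | apply Rinv_0_lt_compat; lra]).
  assert (hd4 : d <= 1 / 4) by apply Rmin_l.
  exists (d ^ 2), (1 / 8). split; [now apply pow_lt |]. split; [lra |].
  intros eps he mu [[ha1 ha2] [hb1 hb2]]. unfold Re, Im in *.
  assert (hs : sqrt eps < d) by (apply sqrt_lt_of_lt_sqr; lra).
  assert (hs0 : 0 < sqrt eps) by now apply sqrt_lt_R0.
  assert (he1 : 0 < eps < 1).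
  { split; [easy |]. apply (Rlt_le_trans _ (d ^ 2)); [easy |].
    simpl. nra. }
  assert (hKs : Kc * sqrt eps <= 1 / 8).
  { assert (h := Rmult_le_compat_l Kc _ _ (Rlt_le _ _ hK) (Rmin_r (1 / 4) (/ (8 * Kc)))).
    replace (Kc * / (8 * Kc)) with (1 / 8) in h by (field; lra). fold d in h. nra. }
  assert (hsa : sqrt eps * fst mu <= 1).
  { assert (h := Rmult_le_compat_l (sqrt eps) _ _ (Rlt_le _ _ hs0) ha2).
    now rewrite Rinv_r in h by lra. }
  assert (Hg := Cmod_g_le_exponent eps mu he1 ltac:(split; nra)).
  assert (HE := gpart_exponent_le (sqrt eps) (fst mu) (snd mu)
                  ltac:(lra) hKs ltac:(lra) ltac:(simpl; nra)).
  eapply Rle_trans; [exact Hg |].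
  rewrite !Cmod_cexp, <- exp_plus. apply exp_le_mono.
  replace (fst (- mu / 2)%C + fst (- RtoC (1 / 8 * sqrt eps) * (mu * mu))%C)
    with ((- fst mu - sqrt eps * (fst mu ^ 2 - snd mu ^ 2) / 4) / 2)
    by (destruct mu; unfold Cdiv, Cinv, Cmult, Copp, RtoC; simpl; field).
  change (tau eps) with ((1 - sqrt eps) / (1 + sqrt eps)). lra.
Qed.

Theorem lemma14 (r : R) (hr : 1 <= r) :
  compactC (Rreg1 r)
  /\ (forall eps, 0 < eps -> forall mu, Ceps eps mu -> Rreg1 r mu \/ Rreg2 r eps mu)
  /\ (forall eta, 0 < eta -> exists delta, 0 < delta /\
        forall eps, 0 < eps < delta -> forall mu, Rreg1 r mu ->
          Cmod (g eps mu - cexp (- mu / 2))%C < eta)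
  /\ (exists eps0 c, 0 < eps0 /\ 0 < c /\
        forall eps, 0 < eps < eps0 -> forall mu, Rreg2 r eps mu ->
          Cmod (g eps mu) <=
            Cmod (cexp (- mu / 2)%C)
            * Cmod (cexp (- (RtoC (c * sqrt eps)) * (mu * mu))%C)).
Proof.
  destruct sin_cos_tan_PI10 as [hs _].
  assert (hM : 0 <= r / sin (PI / 10)) by (apply Rlt_le, Rdiv_lt_0_compat; lra).
  split; [| split; [| split]].
  - apply (compactC_of_closed_bounded _ (r / sin (PI / 10))); [apply closed_Cmod_le | easy].
  - now apply Ceps_sub_Rreg.
  - now apply g_cvg_unif_disc.
  - now apply Cmod_g_le_gaussian.
Qed.
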